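(* Let $\Sigma$ be a finite non-empty alphabet, $\Sigma^*$ the set of finite strings over $\Sigma$, $V=\mathbb{R}^d$ with a fixed norm $|\cdot|_V$, $W=\mathbb{R}^N$ with a fixed norm $|\cdot|_W$, and $\lambda>0$. There is a constant $c(\lambda)>0$ depending only on $\lambda$ such that for all maps $\mathbf{h},\mathbf{g}\colon\Sigma^*\to V$, $$d_{\mathcal{V}(V,\Delta)}(\mathbf{h},\mathbf{g})\le c(\lambda)\, d^{\mathcal{H}}_{\mathrm{Aff}(V)}(\mathbf{h},\mathbf{g}).$$
   Context: $\mathrm{Aff}(V)$ is the group of invertible affine maps of $V$; $\mathrm{Aff}(V,W)$ is the set of affine maps $V\to W$, i.e. $\mathbf{v}\mapsto\mathbf{A}\mathbf{v}+\mathbf{b}$ with $\mathbf{A}$ linear $V\to W$, $\mathbf{b}\in W$. For $\mathbf{f}\colon\Sigma^*\to V$, $\|\mathbf{f}\|_\infty=\sup_{\mathbf{y}}|\mathbf{f}(\mathbf{y})|_V$, and $d_\infty(\mathbf{f},\mathbf{f}')=\|\mathbf{f}-\mathbf{f}'\|_\infty$ (values in $[0,\infty]$); analogously $d_{\infty,W}$ for maps into $W$ and $d_{\infty,\Delta}(p,q)=\sup_{\mathbf{y}}|p(\mathbf{y})-q(\mathbf{y})|_W$ for maps $p,q\colon\Sigma^*\to\Delta^{N-1}$, the probability simplex in $\mathbb{R}^N$. For a (hemi-)metric $d$ and non-empty sets $E,E'$, $d(x,E)=\inf_{y\in E}d(x,y)$ and the Hausdorff–Hoare map is $d^{\mathcal{H}}(E,E')=\sup_{x\in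 E}d(x,E')$. Define $d^{\mathcal{H}}_{\mathrm{Aff}(V)}(\mathbf{h},\mathbf{g})=d_\infty^{\mathcal{H}}(\{\psi\circ\mathbf{h}:\psi\in\mathrm{Aff}(V)\},\{\psi\circ\mathbf{g}:\psi\in\mathrm{Aff}(V)\})$. $\mathrm{softmax}_\lambda\colon\mathbb{R}^N\to\Delta^{N-1}$ is the softmax with inverse temperature $\lambda$, $\mathrm{softmax}_\lambda(\mathbf{x})_i=e^{\lambda x_i}/\sum_j e^{\lambda x_j}$. Let $\mathcal{V}_N(\mathbf{h})=\{\mathrm{softmax}_\lambda\circ\psi\circ\mathbf{h}:\psi\in\mathrm{Aff}(V,W)\}$ and $d_{\mathcal{V}(V,\Delta)}(\mathbf{h},\mathbf{g})=d^{\mathcal{H}}_{\infty,\Delta}(\mathcal{V}_N(\mathbf{h}),\mathcal{V}_N(\mathbf{g}))$. *)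

From HB Require Import structures.
From mathcomp Require Import all_boot all_order all_algebra.
From mathcomp Require Import all_classical all_reals all_analysis.
Set Implicit Arguments. Unset Strict Implicit. Unset Printing Implicit Defensive.
Import Order.TTheory GRing.Theory Num.Theory.
Local Open Scope classical_set_scope.
Local Open Scope ring_scope.

Section Defs.
Variable R : realType.

Definition is_norm (n : nat) (nrm : 'rV[R]_n -> R) : Prop :=
  [/\ forall x, 0 <= nrm x,
      forall x, nrm x = 0 -> x = 0,
      forall (a : R) x, nrm (a *: x) = `|a| * nrm x
    & forall x y, nrm (x + y) <= nrm x + nrm y].

Definition softmax (lam : R) (N : nat) (x : 'rV[R]_N) : 'rV[R]_N :=
  \row_i (expR (lam * x 0 i) / \sum_(j < N) expR (lam * x 0 j)).

Definition d_inf (S : Type) (n : nat) (nrm : 'rV[R]_n -> R)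
    (f f' : S -> 'rV[R]_n) : \bar R :=
  ereal_sup [set (nrm (f y - f' y))%:E | y in [set: S]].

Definition dist_to (T : Type) (dist : T -> T -> \bar R) (x : T) (E : set T)
  : \bar R := ereal_inf [set dist x y | y in E].

Definition hausdorff_hoare (T : Type) (dist : T -> T -> \bar R)
    (E E' : set T) : \bar R :=
  ereal_sup [set dist_to dist x E' | x in E].

Definition aff_orbit (S : Type) (d : nat) (h : S -> 'rV[R]_d)
  : set (S -> 'rV[R]_d) :=
  [set f | exists (A : 'M[R]_d) (b : 'rV[R]_d),
           A \in unitmx /\ f = (fun y => h y *m A + b)].

Definition dH_Aff (S : Type) (d : nat) (nrmV : 'rV[R]_d -> R)
    (h g : S -> 'rV[R]_d) : \bar R :=
  hausdorff_hoare (d_inf nrmV) (aff_orbit h) (aff_orbit g).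

Definition softmax_orbit (lam : R) (S : Type) (d N : nat) (h : S -> 'rV[R]_d)
  : set (S -> 'rV[R]_N) :=
  [set f | exists (A : 'M[R]_(d, N)) (b : 'rV[R]_N),
           f = (fun y => softmax lam (h y *m A + b))].

Definition d_V_Delta (lam : R) (S : Type) (d N : nat) (nrmW : 'rV[R]_N -> R)
    (h g : S -> 'rV[R]_d) : \bar R :=
  hausdorff_hoare (d_inf nrmW) (@softmax_orbit lam S d N h) (@softmax_orbit lam S d N g).

End Defs.

From HB Require Import structures.
From mathcomp Require Import all_boot all_order all_algebra.
From mathcomp Require Import all_classical all_reals all_analysis.
From mathcomp Require Import ring lra.
Set Implicit Arguments. Unset Strict Implicit. Unset Printing Implicit Defensive.
Import Order.TTheory GRing.Theory Num.Theory.
Local Open Scope classical_set_scope.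
Local Open Scope ring_scope.

(* Aff(V) contains the homotheties, so the orbit of h contains s h for every
   s > 0, and s h lies within D := d^H_Aff(h, g) of some affine image of g.
   Dividing by s shows that, when D is finite, h is a uniform limit of affine
   images y |-> g y A + b of g.  Composing with an affine map V -> W and with
   softmax, which is uniformly continuous (and all norms on R^n are equivalent
   to the sup norm), every element of V_N(h) is then a uniform limit of
   elements of V_N(g), so d_V(h, g) = 0 <= D.  Hence c(lam) = 1 works. *)

Section MxNorm.
Variable R : realType.

Lemma mxnorm_rV n (x : 'rV[R]_n) : `|x| = \big[Num.max/0]_ij `|x ij.1 ij.2|.
Proof. by rewrite -mx_normrE. Qed.

Lemma mxnorm_coef_le n (x : 'rV[R]_n) i : `|x 0 i| <= `|x|.
Proof.
rewrite mxnorm_rV.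
exact: (le_bigmax _ (fun ij : 'I_1 * 'I_n => `|x ij.1 ij.2|) (0, i)).
Qed.

Lemma mxnorm_le n (x : 'rV[R]_n) r :
  0 <= r -> (forall i, `|x 0 i| <= r) -> `|x| <= r.
Proof.
move=> r0 xr; rewrite mxnorm_rV.
by apply: bigmax_le => // -[i j] _ /=; rewrite (ord1 i).
Qed.

Lemma mulmx_mxnorm_le d N (A : 'M[R]_(d, N)) :
  exists2 C, 0 < C & forall x : 'rV[R]_d, `|x *m A| <= C * `|x|.
Proof.
have sumA_ge0 : 0 <= \sum_j \sum_i `|A i j|.
  by rewrite sumr_ge0 // => j _; rewrite sumr_ge0.
exists (1 + \sum_j \sum_i `|A i j|); first by rewrite ltr_wpDr.
move=> x; apply: mxnorm_le => [|j]; first by rewrite mulr_ge0 // addr_ge0.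
rewrite mxE; apply: (le_trans (ler_norm_sum _ _ _)).
apply: (@le_trans _ _ (\sum_i `|x| * `|A i j|)).
  by apply: ler_sum => i _; rewrite normrM ler_wpM2r // mxnorm_coef_le.
rewrite -mulr_sumr mulrC ler_wpM2r // ler_wpDl //.
by rewrite (bigD1 j) //= ler_wpDr // sumr_ge0 // => k _; rewrite sumr_ge0.
Qed.

Lemma mxnorm_sphere_compact n : compact [set x : 'rV[R^o]_n | `|x| = 1].
Proof.
apply: bounded_closed_compact.
  by exists 1; split => // M M1 x /= ->; exact: ltW.
exact: (continuous_closedP (fun x : 'rV[R^o]_n => (`|x| : R^o))).1
  (@norm_continuous _ _) _ (@closed_eq R 1).
Qed.

End MxNorm.

Section NormEquivalence.
Variables (R : realType) (n : nat) (nrm : 'rV[R]_n -> R).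
Hypothesis nrmP : is_norm nrm.

Lemma is_norm_ge0 x : 0 <= nrm x. Proof. by case: nrmP. Qed.

Lemma is_normZ a x : nrm (a *: x) = `|a| * nrm x. Proof. by case: nrmP. Qed.

Lemma is_normD x y : nrm (x + y) <= nrm x + nrm y. Proof. by case: nrmP. Qed.

Lemma is_norm_gt0 x : x != 0 -> 0 < nrm x.
Proof.
case: nrmP => _ nrm_eq0 _ _ x0.
by rewrite lt_neqAle is_norm_ge0 andbT eq_sym; apply: contra_neq x0 => /nrm_eq0.
Qed.

Lemma is_norm0 : nrm 0 = 0.
Proof. by rewrite -(scale0r (0 : 'rV[R]_n)) is_normZ normr0 mul0r. Qed.

Lemma is_normN x : nrm (- x) = nrm x.
Proof. by rewrite -scaleN1r is_normZ normrN normr1 mul1r. Qed.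

Lemma is_norm_sum {I : Type} (r : seq I) (F : I -> 'rV[R]_n) :
  nrm (\sum_(i <- r) F i) <= \sum_(i <- r) nrm (F i).
Proof.
elim: r => [|a r IHr]; first by rewrite !big_nil is_norm0.
by rewrite !big_cons (le_trans (is_normD _ _)) // lerD2l.
Qed.

Lemma is_norm_dist x y : `|nrm x - nrm y| <= nrm (x - y).
Proof.
have := is_normD (x - y) y; have := is_normD (y - x) x.
rewrite !subrK -opprB is_normN ler_norml; lra.
Qed.

Lemma is_norm_le_mxnorm : exists2 K, 0 < K & forall x, nrm x <= K * `|x|.
Proof.
have nrm_delta_ge0 : 0 <= \sum_i nrm (delta_mx 0 i).
  by rewrite sumr_ge0 // => i _; exact: is_norm_ge0.
exists (1 + \sum_i nrm (delta_mx 0 i)); first by rewrite ltr_wpDr.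
move=> x; rewrite [in nrm x](row_sum_delta x).
apply: (le_trans (is_norm_sum _ _)).
rewrite mulrDl mul1r ler_wpDl // mulr_suml.
by apply: ler_sum => i _; rewrite is_normZ mulrC ler_wpM2l ?is_norm_ge0 ?mxnorm_coef_le.
Qed.

Lemma is_norm_continuous : continuous (nrm : 'rV[R^o]_n -> R^o).
Proof.
have [K K0 nrmK] := is_norm_le_mxnorm.
move=> x; have nbhs_x : Filter (nbhs x) by exact: alias_nbhs_filter.
apply/(@cvgrPdist_le _ _ _ _ nbhs_x) => e e0.
have := @cvgr_dist_le _ _ _ _ nbhs_x id x (@cvg_id _ (nbhs x)) _ (divr_gt0 e0 K0).
apply: filterS => y xy.
apply: le_trans (is_norm_dist x y) _; apply: le_trans (nrmK _) _.
by rewrite mulrC -ler_pdivlMr.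
Qed.

Lemma is_norm_ge_mxnorm : exists2 k, 0 < k & forall x, k * `|x| <= nrm x.
Proof.
pose S := [set x : 'rV[R^o]_n | `|x| = 1].
have normalize x : x != 0 -> S (`|x|^-1 *: x).
  by move=> x0; rewrite /S /= normrZ normfV normr_id mulVf ?normr_eq0.
have [S0|S0] := pselect (S !=set0); last first.
  exists 1 => // x; have [->|x0] := eqVneq x 0.
    by rewrite normr0 mulr0 is_norm_ge0.
  by case: S0; exists (`|x|^-1 *: x); exact: normalize.
have [c Sc cmin] := EVT_min_rV S0 (@mxnorm_sphere_compact R n)
  (continuous_subspaceT is_norm_continuous).
have c0 : c != 0 by move: Sc; rewrite inE -normr_gt0 => ->.
exists (nrm c); first exact: is_norm_gt0.
move=> x; have [->|x0] := eqVneq x 0; first by rewrite normr0 mulr0 is_norm_ge0.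
have := cmin _ (mem_set (normalize x x0)).
by rewrite is_normZ normfV normr_id ler_pdivlMl ?normr_gt0 // mulrC.
Qed.

End NormEquivalence.

Section Softmax.
Variable R : realType.

Lemma ratio_sub_le (a b SA SB t : R) :
  0 <= a -> 0 < SA -> 0 < SB -> 0 <= b <= SB -> 1 <= t ->
  a <= t * b -> SB <= t * SA -> a / SA - b / SB <= t * t - 1.
Proof.
move=> a0 SA0 SB0 /andP[b0 bSB] t1 ab SBA.
have q0 : 0 <= b / SB by rewrite divr_ge0 // ltW.
have q1 : b / SB <= 1 by rewrite ler_pdivrMr // mul1r.
have tt1 : 1 <= t * t by rewrite -[1]mulr1 ler_pM.
have cross : a * SB <= (t * b) * (t * SA) by rewrite ler_pM // ltW.
have p_le : a / SA <= t * t * (b / SB).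
  have -> : t * t * (b / SB) = t * t * b / SB by rewrite mulrA.
  by rewrite ler_pdivrMr // mulrAC ler_pdivlMr //; lra.
have : 0 <= (t * t - 1) * (1 - b / SB) by rewrite mulr_ge0 // subr_ge0.
lra.
Qed.

Lemma softmax_dist_le (lam delta : R) N (u v : 'rV[R]_N) :
  0 <= lam -> `|u - v| <= delta ->
  `|softmax lam u - softmax lam v| <= expR (2 * lam * delta) - 1.
Proof.
(* Each expR (lam * u 0 k) is within a factor t = expR (lam * delta) of
   expR (lam * v 0 k), hence so are the normalising sums, and each softmax
   coordinate moves by at most t * t - 1. *)
move=> lam0 uv; set t := expR (lam * delta).
have delta0 : 0 <= delta := le_trans (normr_ge0 _) uv.
have t1 : 1 <= t by rewrite -expR0 ler_expR mulr_ge0.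
have tt : t * t = expR (2 * lam * delta) by rewrite -expRD; congr expR; lra.
have exp_le (w z : 'rV[R]_N) : `|w - z| <= delta ->
    forall k, expR (lam * w 0 k) <= t * expR (lam * z 0 k).
  move=> wz k; rewrite -expRD ler_expR -mulrDr ler_wpM2l //.
  have := le_trans (mxnorm_coef_le (w - z) k) wz.
  by rewrite !mxE ler_norml => /andP[_]; lra.
have sum_le (w z : 'rV[R]_N) : `|w - z| <= delta ->
    \sum_k expR (lam * w 0 k) <= t * \sum_k expR (lam * z 0 k).
  by move=> wz; rewrite mulr_sumr; apply: ler_sum => k _; exact: exp_le.
have vu : `|v - u| <= delta by rewrite distrC.
rewrite -tt; apply: mxnorm_le => [|j]; first by rewrite subr_ge0 -[1]mulr1 ler_pM.
have sum_ge (w : 'rV[R]_N) : expR (lam * w 0 j) <= \sum_k expR (lam * w 0 k).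
  by rewrite (bigD1 j) //= lerDl sumr_ge0 // => k _; exact: expR_ge0.
have sum_gt0 (w : 'rV[R]_N) : 0 < \sum_k expR (lam * w 0 k).
  exact: lt_le_trans (expR_gt0 _) (sum_ge w).
suff softmax_sub_le (w z : 'rV[R]_N) : `|w - z| <= delta -> `|z - w| <= delta ->
    expR (lam * w 0 j) / \sum_k expR (lam * w 0 k)
    - expR (lam * z 0 j) / \sum_k expR (lam * z 0 k) <= t * t - 1.
  by rewrite !mxE ler_norml lerNl opprB !softmax_sub_le.
move=> wz zw; apply: ratio_sub_le; rewrite ?expR_ge0 ?sum_gt0 ?sum_ge //.
- exact: exp_le.
- exact: sum_le.
Qed.

Lemma softmax_uniform_cont (lam e : R) N : 0 < lam -> 0 < e ->
  exists2 delta, 0 < delta & forall u v : 'rV[R]_N,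
    `|u - v| <= delta -> `|softmax lam u - softmax lam v| <= e.
Proof.
move=> lam0 e0; exists (ln (1 + e) / (2 * lam)).
  by rewrite divr_gt0 ?mulr_gt0 // ln_gt0 // ltrDl.
move=> u v uv; apply: le_trans (softmax_dist_le (ltW lam0) uv) _.
have -> : 2 * lam * (ln (1 + e) / (2 * lam)) = ln (1 + e).
  by field; rewrite lt0r_neq0.
by rewrite lnK ?posrE ?addr_gt0 // addrC addKr.
Qed.

End Softmax.

Section HausdorffHoare.
Variable R : realType.

Lemma d_inf_ubound (S : Type) n (nrm : 'rV[R]_n -> R) (f f' : S -> 'rV[R]_n) y :
  ((nrm (f y - f' y))%:E <= d_inf nrm f f')%E.
Proof. by apply: ereal_sup_ubound; exists y. Qed.

Lemma d_inf_le (S : Type) n (nrm : 'rV[R]_n -> R) (f f' : S -> 'rV[R]_n) r :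
  (forall y, nrm (f y - f' y) <= r) -> (d_inf nrm f f' <= r%:E)%E.
Proof. by move=> fr; apply: ge_ereal_sup => _ [y _ <-]; rewrite lee_fin. Qed.

Lemma hausdorff_hoare_le0 (T : Type) (dist : T -> T -> \bar R) (E E' : set T) :
  (forall x, E x -> forall e, 0 < e -> exists2 y, E' y & (dist x y <= e%:E)%E) ->
  (hausdorff_hoare dist E E' <= 0)%E.
Proof.
move=> approx; apply: ge_ereal_sup => _ [x Ex <-].
apply/lee_addgt0Pr => e e0; rewrite add0e.
have [y E'y xy] := approx x Ex e e0.
by apply: ge_ereal_inf; exists (dist x y) => //; exists y.
Qed.

End HausdorffHoare.

Section AffineOrbits.
Variables (R : realType) (S : Type) (d : nat) (nrmV : 'rV[R]_d -> R).
Hypothesis nrmVP : is_norm nrmV.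
Implicit Types h g : S -> 'rV[R]_d.

Definition aff_limit h g := forall eta, 0 < eta ->
  exists A b, forall y, nrmV (h y - (g y *m A + b)) <= eta.

Lemma aff_orbit_scale h s : s != 0 -> aff_orbit h (fun y => s *: h y).
Proof.
move=> s0; exists s%:M, 0; split; first by rewrite unitmxE det_scalar unitrX // unitfE.
by apply: funext => y; rewrite mul_mx_scalar addr0.
Qed.

Lemma dH_Aff_ge0 h g : S -> (0 <= dH_Aff nrmV h g)%E.
Proof.
move=> y0.
apply: (@le_trans _ _ (dist_to (d_inf nrmV) (fun y => 1 *: h y) (aff_orbit g))).
  apply: le_ereal_inf_tmp => _ [G _ <-].
  by apply: le_trans (d_inf_ubound _ _ _ y0); rewrite lee_fin is_norm_ge0.
apply: ereal_sup_ubound; exists (fun y => 1 *: h y) => //.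
exact: aff_orbit_scale (oner_neq0 R).
Qed.

Lemma aff_limit_of_dH_Aff_finite h g :
  (dH_Aff nrmV h g < +oo)%E -> aff_limit h g.
Proof.
move=> D_lt_oo eta eta0.
have [M M0 DM] : exists2 M, 0 < M & (dH_Aff nrmV h g < M%:E)%E.
  case: (dH_Aff _ _ _) D_lt_oo => [r _| // | _]; last by exists 1; rewrite ?ltNyr.
  by exists (`|r| + 1); rewrite ?lte_fin; have := ler_norm r; have := normr_ge0 r; lra.
pose s := M / eta; have s0 : 0 < s by rewrite divr_gt0.
have : (dist_to (d_inf nrmV) (fun y => s *: h y) (aff_orbit g) < M%:E)%E.
  apply: le_lt_trans DM; apply: ereal_sup_ubound.
  by exists (fun y => s *: h y) => //; exact: aff_orbit_scale (lt0r_neq0 s0).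
move=> /ereal_inf_lt[_ [_ [A [b [_ ->]]] <-] dM].
exists (s^-1 *: A), (s^-1 *: b) => y.
have -> : h y - (g y *m (s^-1 *: A) + s^-1 *: b)
          = s^-1 *: (s *: h y - (g y *m A + b)).
  by rewrite scalerBr scalerA mulVf ?lt0r_neq0 // scale1r scalerDr scalemxAr.
rewrite is_normZ // gtr0_norm ?invr_gt0 // ler_pdivrMl // /s divfK ?lt0r_neq0 //.
by have := le_lt_trans (d_inf_ubound _ _ _ y) dM; rewrite lte_fin => /ltW.
Qed.

Lemma d_V_Delta_le0 (lam : R) N (nrmW : 'rV[R]_N -> R) h g :
  0 < lam -> is_norm nrmW -> aff_limit h g -> (d_V_Delta lam nrmW h g <= 0)%E.
Proof.
move=> lam0 nrmWP approx.
apply: hausdorff_hoare_le0 => _ [A [b ->]] e e0.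
have [KW KW0 nrmW_le] := is_norm_le_mxnorm nrmWP.
have [kV kV0 nrmV_ge] := is_norm_ge_mxnorm nrmVP.
have [C C0 AC] := mulmx_mxnorm_le A.
have [delta delta0 softmax_uc] := softmax_uniform_cont N lam0 (divr_gt0 e0 KW0).
have [A' [b' hg]] := approx (kV * delta / C) (divr_gt0 (mulr_gt0 kV0 delta0) C0).
exists (fun y => softmax lam (g y *m (A' *m A) + (b' *m A + b))).
  by exists (A' *m A), (b' *m A + b).
apply: d_inf_le => y /=; set z := h y - (g y *m A' + b').
have z_le : `|z| <= delta / C.
  by rewrite -(ler_pM2l kV0) mulrA (le_trans (nrmV_ge z) (hg y)).
have arg_le : `|h y *m A + b - (g y *m (A' *m A) + (b' *m A + b))| <= delta.
  have -> : h y *m A + b - (g y *m (A' *m A) + (b' *m A + b)) = z *m A.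
    by rewrite /z mulmxBl mulmxDl mulmxA [in LHS]addrA [in LHS]opprD addrACA subrr addr0.
  by apply: le_trans (AC z) _; rewrite mulrC -ler_pdivlMr.
by apply: le_trans (nrmW_le _) _; rewrite mulrC -ler_pdivlMr // softmax_uc.
Qed.

End AffineOrbits.

Theorem mainTheorem2 (R : realType) (lam : R) (hlam : 0 < lam) :
  exists c : R, 0 < c /\
  forall (Sigma : finType) (d N : nat)
         (nrmV : 'rV[R]_d -> R) (nrmW : 'rV[R]_N -> R),
    (0 < #|Sigma|)%N -> (0 < N)%N ->
    is_norm nrmV -> is_norm nrmW ->
    forall h g : seq Sigma -> 'rV[R]_d,
      (d_V_Delta lam nrmW h g <= c%:E * dH_Aff nrmV h g)%E.
Proof.
exists 1; split => // Sigma d N nrmV nrmW _ _ nrmVP nrmWP h g; rewrite mul1e.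
have D_ge0 := dH_Aff_ge0 nrmVP h g [::].
have [->|D_neq_oo] := eqVneq (dH_Aff nrmV h g) +oo%E; first by rewrite leey.
apply: le_trans D_ge0; apply: (d_V_Delta_le0 nrmVP hlam nrmWP).
by apply: (aff_limit_of_dH_Aff_finite nrmVP); rewrite ltey.
Qed.
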